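(* Let $q$ be a prime power, let $k\ge 3$ and $n=2k\le q$, and let $h=(k-1)+r$ with $1\le r\le k-2$. Let $\alpha_1,\dots,\alpha_n\in\mathbb{F}_q$ be pairwise distinct, let $G_{h,k}$ be the $k\times n$ matrix whose rows are $(\alpha_1^{e},\dots,\alpha_n^{e})$ for $e=0,1,\dots,k-2$ and $e=h$, and for $\mathbf v=(v_1,\dots,v_n)\in(\mathbb{F}_q^* )^n$ let $C_{h,\mathbf v}$ be the linear code generated by $G_{h,k}\cdot\mathrm{diag}(v_1,\dots,v_n)$. Let $u_i=\prod_{j\ne i}(\alpha_i-\alpha_j)^{-1}$ and $S_1=\alpha_1+\dots+\alpha_n$. Then there exists $\mathbf v\in(\mathbb{F}_q^* )^n$ such that $C_{h,\mathbf v}$ is self-dual if and only if $r=1$ and the following hold: (i) either all $u_i$ ($1\le i\le n$) are squares in $\mathbb{F}_q$, or all $u_i$ are non-squares in $\mathbb{F}_q$; (ii) $S_1=0$.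
   Context: Convention: $0^0=1$. A linear code $C$ is self-dual if $C=C^\perp$, where $C^\perp$ is the dual with respect to the Euclidean inner product. *)

From HB Require Import structures.
From mathcomp Require Import all_boot all_order all_algebra all_field.
Set Implicit Arguments. Unset Strict Implicit. Unset Printing Implicit Defensive.
Import GRing.Theory.
Local Open Scope ring_scope.

Definition Ghk (F : fieldType) (n k h : nat) (alpha : 'I_n -> F) : 'M[F]_(k, n) :=
  \matrix_(i < k, j < n) alpha j ^+ (if (i < k.-1)%N then nat_of_ord i else h).

Definition Chv_gen (F : fieldType) (n k h : nat) (alpha v : 'I_n -> F) : 'M[F]_(k, n) :=
  Ghk k h alpha *m diag_mx (\row_j v j).

(* The linear code generated by the rows of M is its row space; x is in the code
   iff (x <= M)%MS.  The Euclidean dual consists of the x orthogonal to every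
   codeword.  Self-dual: C = C^perp. *)
Definition self_dual (F : fieldType) (m n : nat) (M : 'M[F]_(m, n)) : Prop :=
  forall x : 'rV[F]_n,
    (x <= M)%MS <-> (forall c : 'rV[F]_n, (c <= M)%MS -> x *m c^T = 0).

Definition is_square (F : fieldType) (a : F) : Prop := exists b : F, a = b ^+ 2.

Definition u_coef (F : fieldType) (n : nat) (alpha : 'I_n -> F) (i : 'I_n) : F :=
  \prod_(j < n | j != i) (alpha i - alpha j)^-1.

(* Write w_j = v_j^2.  The Gram matrix of G_{h,k} diag(v) has entries
   \sum_j w_j alpha_j^(e + e'), e and e' ranging over the row exponents, and
   since the code has dimension n/2 it is self-dual iff all of them vanish.
   Lagrange interpolation on the nodes alpha_j shows that \sum_j u_j alpha_j^m
   is 0 for m < n-1, 1 for m = n-1 and S_1 for m = n, and that a weight vector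
   with vanishing moments of orders < n is zero.  For r >= 2 the exponent sums
   cover 0..n-1, which forces w = 0.  For r = 1 they cover 0..n-2 and n but
   not n-1, so w = l u for some l != 0 with l S_1 = 0.  Finally, some l != 0
   makes every l u_j a square iff the u_j are all squares or all non-squares,
   because a product of two non-squares in a finite field is a square. *)

From HB Require Import structures.
From mathcomp Require Import all_boot all_order all_algebra all_field.
From mathcomp Require Import zify.
Import GRing.Theory.
Local Open Scope ring_scope.

Set Implicit Arguments.
Unset Strict Implicit.
Unset Printing Implicit Defensive.

Lemma is_square_div (F : fieldType) (a b : F) :
  is_square a -> is_square b -> is_square (a / b).
Proof. by case=> x ->; case=> y ->; exists (x / y); rewrite expr_div_n. Qed.

Lemma nonsquare_neq0 (F : fieldType) (a : F) : ~ is_square a -> a != 0.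
Proof. by apply: contra_notN => /eqP->; exists 0; rewrite expr0n. Qed.

Section FiniteFieldSquares.
Variable F : finFieldType.

Let Z := [set x : F | x != 0].
Let Q := [set x ^+ 2 | x in Z].

Lemma nonzero_is_squareE (a : F) : a != 0 -> is_square a <-> a \in Q.
Proof.
move=> a0; split=> [[x ax]|/imsetP[x _ ->]]; last by exists x.
by apply/imsetP; exists x; rewrite // inE -(sqrf_eq0 x) -ax.
Qed.

Lemma card_nonzero_leq_sqr : (#|Z| <= 2 * #|Q|)%N.
Proof.
pose rt (s : F) := odflt 0 [pick y | y ^+ 2 == s].
have rt_sqr y : rt (y ^+ 2) = y \/ rt (y ^+ 2) = - y.
  rewrite /rt; case: pickP => [x|/(_ y)]; last by rewrite eqxx.
  rewrite -subr_eq0 subr_sqr mulf_eq0 subr_eq0 addr_eq0 /=.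
  by case/orP=> /eqP ->; [left | right].
have : Z \subset rt @: Q :|: (fun s => - rt s) @: Q.
  apply/subsetP=> y Zy; have Qy : y ^+ 2 \in Q by apply: imset_f.
  rewrite inE; case: (rt_sqr y) => E; apply/orP; [left | right];
    by apply/imsetP; exists (y ^+ 2); rewrite // E ?opprK.
move/subset_leq_card/leq_trans; apply.
rewrite cardsU mul2n -addnn (leq_trans (leq_subr _ _)) //.
by rewrite leq_add ?leq_imset_card.
Qed.

Lemma nonsquare_mulr_sqr (a : F) : ~ is_square a ->
  (fun s => a * s) @: Q = Z :\: Q.
Proof.
move=> na; have a0 := nonsquare_neq0 na.
have QZ : Q \subset Z.
  by apply/subsetP=> _ /imsetP[x Zx ->]; rewrite !inE sqrf_eq0 in Zx *.
apply/eqP; rewrite eqEcard; apply/andP; split.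
- apply/subsetP=> _ /imsetP[_ /imsetP[x Zx ->] ->].
  have x0 : x != 0 by rewrite inE in Zx.
  have ax0 : a * x ^+ 2 != 0 by rewrite mulf_neq0 ?expf_neq0.
  rewrite !inE ax0 andbT; apply/negP=> Qax; apply: na.
  rewrite -(mulfK (expf_neq0 2 x0) a).
  by apply: is_square_div; [exact/(nonzero_is_squareE ax0) | exists x].
- rewrite (cardsDS QZ) (card_imset _ (mulfI a0)).
  by rewrite leq_subLR addnn -mul2n card_nonzero_leq_sqr.
Qed.

Lemma nonsquare_mul (a b : F) :
  ~ is_square a -> ~ is_square b -> is_square (a * b).
Proof.
move=> na nb; have b0 := nonsquare_neq0 nb.
have : b \in Z :\: Q.
  by rewrite !inE b0 andbT; apply: contra_notN nb => /imsetP[x _ ->]; exists x.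
rewrite -(nonsquare_mulr_sqr na) => /imsetP[_ /imsetP[x _ ->] ->].
by exists (a * x); rewrite mulrA -expr2 exprMn.
Qed.

Lemma uniform_square_classP (I : finType) (x : I -> F) : (forall i, x i != 0) ->
  (exists2 c, c != 0 & forall i, is_square (c * x i)) <->
  (forall i, is_square (x i)) \/ (forall i, ~ is_square (x i)).
Proof.
move=> x0; split=> [[c c0 cx]|[sq | nsq]].
- have [cQ|cQ] := boolP (c \in Q).
    left=> i; rewrite -[x i](mulKf c0) mulrC.
    by apply: is_square_div; last exact/(nonzero_is_squareE c0).
  right=> i sqx; apply/(negP cQ)/(nonzero_is_squareE c0).
  by rewrite -(mulfK (x0 i) c); apply: is_square_div.
- by exists 1 => [|i]; rewrite ?oner_neq0 ?mul1r.
- case: (pickP (@predT I)) => [i0 _|I0]; first by exists (x i0) => // i; apply: nonsquare_mul.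
  by exists 1 => [|i]; [exact: oner_neq0 | have := I0 i].
Qed.

End FiniteFieldSquares.

Section Moments.
Variables (F : fieldType) (n : nat) (alpha : 'I_n -> F).

Definition moment (w : 'I_n -> F) (m : nat) : F := \sum_(j < n) w j * alpha j ^+ m.

Lemma moment_scaled (w w' : 'I_n -> F) c m :
  (forall j, w j = c * w' j) -> moment w m = c * moment w' m.
Proof. by move=> ww'; rewrite mulr_sumr; apply: eq_bigr => j _; rewrite ww' mulrA. Qed.

Lemma moment_poly (w : 'I_n -> F) (q : {poly F}) : (size q <= n)%N ->
  \sum_(j < n) w j * q.[alpha j] = \sum_(m < n) q`_m * moment w m.
Proof.
move=> sq; under eq_bigr do rewrite (horner_coef_wide _ sq) mulr_sumr.
rewrite exchange_big; apply: eq_bigr => m _; rewrite mulr_sumr.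
by apply: eq_bigr => j _; rewrite mulrCA.
Qed.

Hypothesis alpha_inj : injective alpha.

Let nodes := \prod_(i < n) ('X - (alpha i)%:P).
Let nodes_but j := \prod_(i < n | i != j) ('X - (alpha i)%:P).

Let size_sum_leq (I : finType) (p : I -> {poly F}) :
  (forall i, (size (p i) <= n)%N) -> (size (\sum_i p i)%R <= n)%N.
Proof.
move=> sp; apply: (big_ind (fun q : {poly F} => size q <= n)%N) => //.
  by rewrite size_poly0.
by move=> p1 p2 s1 s2; rewrite (leq_trans (size_polyD _ _)) // geq_max s1.
Qed.

Lemma poly_eq0_on_nodes (q : {poly F}) :
  (size q <= n)%N -> (forall j, q.[alpha j] = 0) -> q = 0.
Proof.
move=> sq q0; apply: (@roots_geq_poly_eq0 _ q [seq alpha j | j <- enum 'I_n]).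
- by apply/allP=> _ /mapP[j _ ->]; apply/rootP.
- by rewrite map_inj_uniq ?enum_uniq.
- by rewrite size_map size_enum_ord.
Qed.

Let nodesE j : nodes = nodes_but j * ('X - (alpha j)%:P).
Proof. by rewrite /nodes (bigD1 j) //= mulrC. Qed.

Let size_nodes : size nodes = n.+1.
Proof. by rewrite size_prod_XsubC [index_enum _]unlock -enumT size_enum_ord. Qed.

Let monic_nodes : nodes \is monic.
Proof. exact: monic_prod_XsubC. Qed.

Let coef_nodes : (0 < n)%N -> nodes`_n.-1 = - \sum_(i < n) alpha i.
Proof.
move=> n_gt0; have size_s : size [seq alpha i | i <- index_enum 'I_n] = n.
  by rewrite size_map [index_enum _]unlock -enumT size_enum_ord.
have := @coefPn_prod_XsubC _ [seq alpha i | i <- index_enum 'I_n].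
by rewrite size_s -lt0n big_map [in RHS]big_map => ->.
Qed.

Let monic_nodes_but j : nodes_but j \is monic.
Proof. exact: monic_prod_XsubC. Qed.

Let size_nodes_but j : size (nodes_but j) = n.
Proof.
apply/succn_inj; rewrite -size_nodes (nodesE j) size_Mmonic ?monicXsubC //.
by rewrite size_XsubC addn2.
exact: monic_neq0.
Qed.

Let coef_nodes_but j : (nodes_but j)`_n.-1 = 1.
Proof. by rewrite -(size_nodes_but j) -lead_coefE; apply/monicP. Qed.

Let nodes_but_other j i : i != j -> (nodes_but j).[alpha i] = 0.
Proof. by move=> ij; rewrite horner_prod (bigD1 i) //= hornerXsubC subrr mul0r. Qed.

Let nodes_but_self j : (nodes_but j).[alpha j] = \prod_(i < n | i != j) (alpha j - alpha i).
Proof. by rewrite horner_prod; under eq_bigr do rewrite hornerXsubC. Qed.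

Let nodes_but_self_neq0 j : (nodes_but j).[alpha j] != 0.
Proof.
rewrite nodes_but_self; apply/prodf_neq0 => i ij.
by rewrite subr_eq0; apply: contra ij => /eqP/alpha_inj->.
Qed.

Let u_coef_nodes_but j : u_coef alpha j * (nodes_but j).[alpha j] = 1.
Proof. by rewrite /u_coef prodfV -nodes_but_self mulVf. Qed.

Lemma u_coef_neq0 j : u_coef alpha j != 0.
Proof.
by apply: contra_eq_neq (u_coef_nodes_but j) => ->; rewrite mul0r eq_sym oner_neq0.
Qed.

Lemma coef_interpolation (q : {poly F}) : (size q <= n)%N ->
  q`_n.-1 = \sum_(j < n) q.[alpha j] * u_coef alpha j.
Proof.
move=> sq; pose r := \sum_(j < n) (q.[alpha j] * u_coef alpha j) *: nodes_but j.
have qr : q = r.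
  apply/eqP; rewrite -subr_eq0; apply/eqP/poly_eq0_on_nodes => [|i].
    rewrite (leq_trans (size_polyD _ _)) // size_polyN geq_max sq.
    by apply: size_sum_leq => j; rewrite (leq_trans (size_scale_leq _ _)) ?size_nodes_but.
  rewrite hornerD hornerN horner_sum (bigD1 i) //= big1 => [|j ji].
    by rewrite hornerZ -mulrA u_coef_nodes_but mulr1 addr0 subrr.
  by rewrite hornerZ nodes_but_other ?mulr0 // eq_sym.
rewrite {1}qr coef_sum; apply: eq_bigr => j _.
by rewrite coefZ coef_nodes_but mulr1.
Qed.

Lemma moment_u_coef m : (m < n)%N -> moment (u_coef alpha) m = (m == n.-1)%:R.
Proof.
move=> mn; rewrite eq_sym -coefXn coef_interpolation ?size_polyXn //.
by apply: eq_bigr => j _; rewrite hornerXn mulrC.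
Qed.

Lemma moment_u_coef_n : (0 < n)%N -> moment (u_coef alpha) n = \sum_(i < n) alpha i.
Proof.
move=> n_gt0; have size_q : (size ('X^n - nodes)%R <= n)%N.
  apply/leq_sizeP => i; rewrite leq_eqVlt coefB coefXn => /orP[/eqP<-|ni].
    rewrite eqxx -[n in nodes`_n]/(n.+1.-1) -size_nodes -lead_coefE.
    by rewrite (monicP monic_nodes) subrr.
  by rewrite nth_default ?size_nodes // gtn_eqF // subrr.
have := coef_interpolation size_q; rewrite coefB coefXn coef_nodes // ltn_eqF ?ltn_predL //.
rewrite sub0r opprK => ->; apply: eq_bigr => j _.
by rewrite hornerD hornerN (nodesE j) hornerM hornerXsubC subrr mulr0 subr0 hornerXn mulrC.
Qed.

Lemma moments_eq0 (w : 'I_n -> F) :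
  (forall m, (m < n)%N -> moment w m = 0) -> forall j, w j = 0.
Proof.
move=> w0 j; have := moment_poly w (eq_leq (size_nodes_but j)).
rewrite [RHS]big1 => [|m _]; last by rewrite w0 ?mulr0.
rewrite (bigD1 j) //= big1 => [|i ij]; last by rewrite nodes_but_other ?mulr0.
by rewrite addr0 => /eqP; rewrite mulf_eq0 (negPf (nodes_but_self_neq0 j)) orbF => /eqP.
Qed.

Lemma moments_eq0_u_coef (w : 'I_n -> F) :
  (forall m, (m < n.-1)%N -> moment w m = 0) ->
  forall j, w j = moment w n.-1 * u_coef alpha j.
Proof.
move=> w0 j; apply/eqP; rewrite -subr_eq0; apply/eqP; move: j.
apply: moments_eq0 => m mn; set l := moment w n.-1.
have -> : moment (fun j => w j - l * u_coef alpha j) m =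
          moment w m - l * moment (u_coef alpha) m.
  by rewrite /moment mulr_sumr -sumrB; apply: eq_bigr => j _; rewrite mulrBl mulrA.
rewrite moment_u_coef //; have [m_lt|m_ge] := ltnP m n.-1.
  by rewrite w0 // ltn_eqF // mulr0 subr0.
have -> : m = n.-1 by lia.
by rewrite eqxx mulr1 subrr.
Qed.

End Moments.

Lemma orthogonal_codeP (F : fieldType) m n (M : 'M[F]_(m, n)) (x : 'rV[F]_n) :
  (forall c : 'rV[F]_n, (c <= M)%MS -> x *m c^T = 0) <-> x *m M^T = 0.
Proof.
split=> [xc | xM c /submxP[a ->]]; last by rewrite trmx_mul mulmxA xM mul0mx.
apply/rowP=> j; have := xc _ (row_sub j M) => /rowP/(_ 0).
by rewrite tr_row colE mulmxA -colE !mxE.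
Qed.

Lemma self_dual_row_freeP (F : fieldType) m n (M : 'M[F]_(m, n)) :
  n = (m + m)%N -> row_free M -> self_dual M <-> M *m M^T = 0.
Proof.
move=> nE Mfree; split=> [sd | MM x].
  by apply/row_matrixP=> i; rewrite row_mul row0; apply/orthogonal_codeP/sd/row_sub.
rewrite orthogonal_codeP; split=> [/submxP[a ->] | xM]; first by rewrite -mulmxA MM mulmx0.
have MK : (M <= kermx M^T)%MS by apply/sub_kermxP.
have rkK : \rank (kermx M^T) = \rank M by rewrite mxrank_ker mxrank_tr (eqP Mfree) nE addnK.
have MKeq : (M == kermx M^T)%MS by rewrite -(mxrank_leqif_eq MK).2 rkK.
by rewrite (eqmxP MKeq); apply/sub_kermxP.
Qed.

Definition row_exp (k h : nat) (i : 'I_k) : nat := if (i < k.-1)%N then nat_of_ord i else h.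

Lemma row_exp_low k h a : (a < k.-1)%N -> exists i : 'I_k, row_exp h i = a.
Proof.
by move=> ak; exists (Ordinal (leq_trans ak (leq_pred k))); rewrite /row_exp /= ak.
Qed.

Lemma row_exp_top k h : (0 < k)%N -> exists i : 'I_k, row_exp h i = h.
Proof.
move=> k0; have km : (k.-1 < k)%N by rewrite ltn_predL.
by exists (Ordinal km); rewrite /row_exp /= ltnn.
Qed.

Lemma row_exp_inj k h : (k.-1 <= h)%N -> injective (@row_exp k h).
Proof.
move=> kh i i'; rewrite /row_exp => E; apply: ord_inj.
by move: E (ltn_ord i) (ltn_ord i'); case: ifP; case: ifP; lia.
Qed.

Lemma row_exp_sum_cover k h m : (1 < k)%N -> (h <= 2 * k - 3)%N -> (m <= h + k - 2)%N ->
  exists i i' : 'I_k, (row_exp h i + row_exp h i')%N = m.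
Proof.
move=> k1 hk mh; have low a : (a < k.-1)%N -> exists i : 'I_k, row_exp h i = a.
  exact: row_exp_low.
have [m_le|m_gt] := leqP m (k - 2).
  have [[i Ei] [i' Ei']] := (low m ltac:(lia), low 0%N ltac:(lia)).
  by exists i, i'; rewrite Ei Ei' addn0.
have [m_lt|m_ge] := ltnP m h.
  have [[i Ei] [i' Ei']] := (low (k - 2)%N ltac:(lia), low (m - (k - 2))%N ltac:(lia)).
  by exists i, i'; rewrite Ei Ei'; lia.
have [[i Ei] [i' Ei']] := (row_exp_top h (ltnW k1), low (m - h)%N ltac:(lia)).
by exists i, i'; rewrite Ei Ei'; lia.
Qed.

Lemma row_exp_sum_self k (i i' : 'I_k) :
  (row_exp k i + row_exp k i' < (k + k).-1)%N \/ (row_exp k i + row_exp k i')%N = (k + k)%N.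
Proof. by move: (ltn_ord i) (ltn_ord i'); rewrite /row_exp; case: ifP; case: ifP; lia. Qed.

Section GeneratorMatrix.
Variables (F : fieldType) (n k h : nat) (alpha v : 'I_n -> F).

Lemma Chv_genE i j : Chv_gen k h alpha v i j = alpha j ^+ row_exp h i * v j.
Proof. by rewrite /Chv_gen mul_mx_diag !mxE. Qed.

Lemma Chv_gen_gram i i' :
  (Chv_gen k h alpha v *m (Chv_gen k h alpha v)^T) i i' =
  moment alpha (fun j => v j ^+ 2) (row_exp h i + row_exp h i').
Proof.
rewrite mxE; apply: eq_bigr => j _.
by rewrite [_^T _ _]mxE !Chv_genE exprD mulrACA -expr2 mulrC.
Qed.

Hypotheses (alpha_inj : injective alpha) (v_neq0 : forall j, v j != 0).
Hypotheses (h_ge : (k.-1 <= h)%N) (h_lt : (h < n)%N).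

Lemma row_free_Chv_gen : row_free (Chv_gen k h alpha v).
Proof.
rewrite -kermx_eq0; apply/eqP/row_matrixP => i; rewrite row0.
set a := row i _; have aC : a *m Chv_gen k h alpha v = 0 by rewrite -row_mul mulmx_ker row0.
pose p := \sum_(l < k) a 0 l *: 'X^(row_exp h l).
have coef_p m : p`_m = \sum_(l < k) a 0 l * (m == row_exp h l)%:R.
  by rewrite coef_sum; apply: eq_bigr => l _; rewrite coefZ coefXn.
have row_exp_lt (l : 'I_k) : (row_exp h l < n)%N.
  by rewrite /row_exp; case: ifP => // il; lia.
have p0 : p = 0.
  apply: (poly_eq0_on_nodes alpha_inj) => [|j].
    apply/leq_sizeP => m nm; rewrite coef_p big1 // => l _.
    by rewrite gtn_eqF ?mulr0 // (leq_trans (row_exp_lt l)).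
  have /rowP/(_ j) := aC; rewrite !mxE.
  rewrite (eq_bigr (fun l => a 0 l * alpha j ^+ row_exp h l * v j)) => [|l _]; last first.
    by rewrite Chv_genE mulrA.
  move/eqP; rewrite -mulr_suml mulf_eq0 (negPf (v_neq0 j)) orbF => /eqP <-.
  by rewrite horner_sum; apply: eq_bigr => l _; rewrite hornerZ hornerXn.
apply/rowP => l; have := coef_p (row_exp h l); rewrite p0 coef0 (bigD1 l) //= big1.
  by rewrite eqxx mulr1 addr0 !mxE.
by move=> l' l'l; rewrite (inj_eq (row_exp_inj h_ge)) eq_sym (negPf l'l) mulr0.
Qed.

Lemma self_dual_Chv_genP : n = (k + k)%N ->
  self_dual (Chv_gen k h alpha v) <->
  forall i i' : 'I_k, moment alpha (fun j => v j ^+ 2) (row_exp h i + row_exp h i') = 0.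
Proof.
move=> nE; apply: iff_trans (self_dual_row_freeP nE row_free_Chv_gen) _.
split=> [C0 i i' | w0]; first by rewrite -Chv_gen_gram C0 mxE.
by apply/matrixP=> i i'; rewrite Chv_gen_gram w0 mxE.
Qed.

End GeneratorMatrix.

Lemma row_exp_sum_moments_eq0P (F : fieldType) (k r n : nat) (alpha w : 'I_n -> F) :
  (1 <= r)%N -> (r <= k - 2)%N -> n = (k + k)%N -> injective alpha ->
  (forall j, w j != 0) ->
  (forall i i' : 'I_k,
     moment alpha w (row_exp (k - 1 + r) i + row_exp (k - 1 + r) i') = 0) <->
  [/\ r = 1%N, exists2 l, l != 0 & (forall j, w j = l * u_coef alpha j)
    & \sum_(i < n) alpha i = 0].
Proof.
move=> r_gt0 r_le nE alpha_inj w_neq0.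
have [h hE] : {h | h = k - 1 + r}%N by exists (k - 1 + r)%N.
rewrite -hE.
have n_gt0 : (0 < n)%N by lia.
split=> [mom | [r1 [l _ wE] S0] i i'].
- have w_low m : (m <= h + k - 2)%N -> moment alpha w m = 0.
    by move=> mh; have [i [i' <-]] := @row_exp_sum_cover k h m ltac:(lia) ltac:(lia) mh.
  have r1 : r = 1%N.
    apply/eqP; rewrite eqn_leq r_gt0 andbT; apply/negP => r2.
    have := moments_eq0 alpha_inj (fun m mn => w_low m ltac:(lia)) (Ordinal n_gt0).
    exact/eqP/w_neq0.
  have wE := moments_eq0_u_coef alpha_inj (fun m mn => w_low m ltac:(lia)).
  set l := moment alpha w n.-1 in wE.
  have l_neq0 : l != 0.
    by apply: contraNneq (w_neq0 (Ordinal n_gt0)) => l0; rewrite wE l0 mul0r.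
  split=> //; first by exists l.
  have [i top] : exists i : 'I_k, row_exp h i = h by apply: row_exp_top; lia.
  have := mom i i; rewrite top (_ : h + h = n)%N; last by lia.
  rewrite (moment_scaled _ _ wE) moment_u_coef_n // => /eqP.
  by rewrite mulf_eq0 (negPf l_neq0) => /eqP.
- rewrite (moment_scaled _ _ wE) (_ : h = k); last by lia.
  have [s_lt|->] := row_exp_sum_self i i'; last by rewrite -nE moment_u_coef_n // S0 mulr0.
  by rewrite moment_u_coef ?ltn_eqF ?mulr0 //; lia.
Qed.

Theorem theorem4p14 (F : finFieldType) (k r n : nat) (alpha : 'I_n -> F) :
  (3 <= k)%N -> n = (2 * k)%N -> (n <= #|F|)%N ->
  (1 <= r)%N -> (r <= k - 2)%N ->
  injective alpha ->
  (exists v : 'I_n -> F, (forall i, v i != 0) /\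
      self_dual (Chv_gen k (k - 1 + r) alpha v))
  <->
  (r = 1%N /\
   ((forall i, is_square (u_coef alpha i)) \/ (forall i, ~ is_square (u_coef alpha i))) /\
   \sum_(i < n) alpha i = 0).
Proof.
(* 3 <= k follows from 1 <= r <= k - 2, and n <= #|F| from injectivity. *)
move=> _ nE _ r_gt0 r_le alpha_inj; have nkk : n = (k + k)%N by lia.
have sdP v (v_neq0 : forall j, v j != 0) :=
  self_dual_Chv_genP (k := k) (h := k - 1 + r) alpha_inj v_neq0 ltac:(lia) ltac:(lia) nkk.
have momP v (v_neq0 : forall j, v j != 0) :=
  row_exp_sum_moments_eq0P r_gt0 r_le nkk alpha_inj (fun j => expf_neq0 2 (v_neq0 j)).
have sq_classP := uniform_square_classP (u_coef_neq0 alpha_inj).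
split=> [[v [v_neq0 /(sdP v v_neq0)/(momP v v_neq0)]] | [r1 [u_sq S0]]].
- case=> r1 [l l_neq0 vE] S0; split=> //; split=> //.
  by apply/sq_classP; exists l => // j; exists (v j); rewrite vE.
- have [l l_neq0 /fin_all_exists[v vE]] := sq_classP.2 u_sq.
  have v_neq0 j : v j != 0 by rewrite -sqrf_eq0 -vE mulf_neq0 ?u_coef_neq0.
  exists v; split=> //; apply/(sdP v v_neq0)/(momP v v_neq0).
  by split=> //; exists l => // j; rewrite vE.
Qed.
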